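(* For the binary tree-shifts $X_{10}=(B,D)$ and $X_{12}=(B,F)$, the limit $h_{PS}$ exists and $$h_{PS}(X_{10})=h_{PS}(X_{12})=\frac12\sum_{n=2}^\infty\frac{\log n}{2^n}.$$
   Context: Binary tree-shifts: $k=2$, directions $a_1,a_2$, alphabet $\{0,1\}$; $(P,Q)$ is the set of trees $t:\{a_1,a_2\}^*\to\{0,1\}$ with $P_{t_x,t_{xa_1}}=1$, $Q_{t_x,t_{xa_2}}=1$ for all nodes $x$. Matrices: $B=\begin{pmatrix}1&0\\0&1\end{pmatrix}$, $D=\begin{pmatrix}1&1\\1&0\end{pmatrix}$, $F=\begin{pmatrix}0&1\\1&1\end{pmatrix}$. $p(n)$ is the number of allowed blocks of length $n$ (labellings $t|_{\Delta_n}$, $\Delta_n$ the words of length $\le n$), and $h_{PS}=\lim_{n\to\infty}\frac{\log p(n)}{1+2+\cdots+2^n}$. *)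

From HB Require Import structures.
From mathcomp Require Import all_boot all_order all_algebra.
From mathcomp Require Import all_classical all_reals all_analysis.
Set Implicit Arguments. Unset Strict Implicit. Unset Printing Implicit Defensive.
Import Order.TTheory GRing.Theory Num.Theory.

(* Directions: a1 = false, a2 = true.
   Nodes are words over {a1,a2}: seq bool; the child x a_i is rcons x a_i. *)

Definition node := seq bool.

Definition in_shift (P Q : 'M[nat]_2) (t : node -> 'I_2) : Prop :=
  forall x : node, P (t x) (t (rcons x false)) = 1%N /\ Q (t x) (t (rcons x true)) = 1%N.

Fixpoint words_len (k : nat) : seq node :=
  if k is k'.+1 then
    [seq rcons w b | w <- words_len k', b <- [:: false; true]]
  else [:: [::]].

Definition words_upto (n : nat) : seq node :=
  flatten [seq words_len k | k <- iota 0 n.+1].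

(* the block t|_{Delta_n}, listed along the (duplicate-free) enumeration words_upto n *)
Definition block (t : node -> 'I_2) (n : nat) : seq 'I_2 := map t (words_upto n).

Definition allowed_blocks (P Q : 'M[nat]_2) (n : nat) :
  {set (size (words_upto n)).-tuple 'I_2} :=
  [set s | `[< exists t, in_shift P Q t /\ block t n = tval s >]].

Definition p_count (P Q : 'M[nat]_2) (n : nat) : nat := #|allowed_blocks P Q n|.

Definition matB : 'M[nat]_2 := \matrix_(i < 2, j < 2) nat_of_bool (i == j).
Definition matD : 'M[nat]_2 :=
  \matrix_(i < 2, j < 2) (if (i == 1 :> nat) && (j == 1 :> nat) then 0 else 1)%N.
Definition matF : 'M[nat]_2 :=
  \matrix_(i < 2, j < 2) (if (i == 0 :> nat) && (j == 0 :> nat) then 0 else 1)%N.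

Local Open Scope ring_scope.

Definition hPS_seq (R : realType) (P Q : 'M[nat]_2) (n : nat) : R :=
  ln ((p_count P Q n)%:R) / (\sum_(i < n.+1) 2 ^ i)%N%:R.

Definition log_series_partial (R : realType) (N : nat) : R :=
  \sum_(2 <= n < N) ln (n%:R : R) / 2 ^+ n.

From HB Require Import structures.
From mathcomp Require Import all_boot all_order all_algebra.
From mathcomp Require Import all_classical all_reals all_analysis.
From mathcomp Require Import ring lra zify.
Import Order.TTheory GRing.Theory Num.Theory.
Import numFieldNormedType.Exports.
Set Implicit Arguments. Unset Strict Implicit. Unset Printing Implicit Defensive.

(* For any pair (P,Q) in which every symbol has a P-follower and
   a Q-follower, we build by recursion on the depth n, for each root symbol
   c, a duplicate-free list [reps n c] of trees of the shift with root c
   which represents every such tree exactly once up to agreement on the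
   words of length <= n.  A tree of depth n+1 is a root c together with a
   left and a right subtree of depth n whose roots are P- resp. Q-followers
   of c, so the sizes N_n(c) satisfy
     N_{n+1}(c) = (sum_{d P-follows c} N_n(d)) * (sum_{d Q-follows c} N_n(d)),
   and p(n) = sum_c N_n(c).  For (B,D) and (B,F) this recursion is
   X' = X (X + Y), Y' = Y X with X_0 = Y_0 = 1, solved by Y_n = Yseq n,
   X_n = (n+1) Yseq n where Yseq (n+1) = (n+1) Yseq(n)^2; hence
   p(n) = (n+2) Yseq n for both shifts.

   Analysis.  log Yseq n = 2^n S_{n+1} where S_N = sum_{2<=k<N} log k / 2^k
   is the partial sum of the series; S_N is nondecreasing and bounded by 2,
   so it converges to S.  Since 1 + 2 + ... + 2^n = 2^{n+1} - 1,
     log p(n) / (2^{n+1} - 1)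
       = 2^n / (2^{n+1} - 1) * (S_{n+1} + 4 (S_{n+3} - S_{n+2})) --> S / 2. *)

(* Labelled full binary trees; by classical choice they form an eqType. *)
Definition tree := node -> 'I_2.

Definition agree (n : nat) (t t' : tree) : Prop :=
  forall w : node, size w <= n -> t w = t' w.

Lemma mem_words_len k w : (w \in words_len k) = (size w == k).
Proof.
elim: k w => [|k IH] w /=; first by case: w.
apply/flatten_mapP/idP => [[w' Hw']|].
  by rewrite !inE => /orP [] /eqP ->; rewrite size_rcons eqSS -IH.
case/lastP: w => [//|w' b]; rewrite size_rcons eqSS -IH => Hw'.
by exists w' => //; case: b; rewrite !inE eqxx ?orbT.
Qed.

Lemma mem_words_upto n w : (w \in words_upto n) = (size w <= n).
Proof.
apply/flatten_mapP/idP => [[k] | Hw].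
  by rewrite mem_iota add0n ltnS => Hk; rewrite mem_words_len => /eqP ->.
by exists (size w); rewrite ?mem_words_len // mem_iota add0n ltnS.
Qed.

Lemma block_eqP n t t' : block t n = block t' n <-> agree n t t'.
Proof.
split => [/eq_in_map E w Hw | A]; first by apply: E; rewrite mem_words_upto.
by apply/eq_in_map => w; rewrite mem_words_upto; apply: A.
Qed.

Definition join (c : 'I_2) (tl tr : tree) : tree :=
  fun w => if w is b :: w' then (if b then tr w' else tl w') else c.

Definition subtree (b : bool) (t : tree) : tree := fun w => t (b :: w).

Lemma agree_join n c tl tr t :
  agree n.+1 t (join c tl tr) <->
  [/\ t [::] = c, agree n (subtree false t) tl & agree n (subtree true t) tr].
Proof.
split => [A | [<- Al Ar] [|b w] //= Hw].
  split => [|w Hw|w Hw]; first exact: (A [::]).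
    exact: (A (false :: w)).
  exact: (A (true :: w)).
by case: b; [exact: Ar | exact: Al].
Qed.

Lemma agree_root n t t' : agree n t t' -> t [::] = t' [::].
Proof. by apply. Qed.

Definition symbols : seq 'I_2 := [:: ord0; ord_max].

Lemma mem_symbols c : c \in symbols.
Proof. by case: c => -[|[|m]] Hm; rewrite ?inE -?val_eqE. Qed.

Definition succ (M : 'M[nat]_2) (c : 'I_2) : seq 'I_2 :=
  [seq d <- symbols | M c d == 1%N].

Lemma mem_succ M c d : (d \in succ M c) = (M c d == 1%N).
Proof. by rewrite mem_filter mem_symbols andbT. Qed.

Lemma uniq_succ M c : uniq (succ M c).
Proof. exact: filter_uniq. Qed.

Definition next_in (M : 'M[nat]_2) (c : 'I_2) : 'I_2 := head c (succ M c).

Lemma next_inP M c : succ M c != [::] -> M c (next_in M c) = 1%N.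
Proof.
rewrite /next_in; case E: (succ M c) => [|d s] // _.
by apply/eqP; rewrite -mem_succ E mem_head.
Qed.

Lemma card_tuples (T : finType) k (l : seq (seq T)) : uniq l ->
  all (fun x => size x == k) l ->
  #|[set u : k.-tuple T | tval u \in l]| = size l.
Proof.
move=> ul sl; rewrite cardE -(size_map val); apply/perm_size/uniq_perm => //.
  by rewrite (map_inj_uniq val_inj) enum_uniq.
move=> x; apply/mapP/idP => [[u] | xl]; first by rewrite mem_enum inE => ? ->.
by exists (Tuple (allP sl x xl)); rewrite // mem_enum inE.
Qed.

Definition represents (A : tree -> Prop) (n : nat) (s : seq tree) : Prop :=
  [/\ {in s, forall t, A t},
      forall t, A t -> exists2 t', t' \in s & agree n t t',
      uniq s &
      {in s &, forall t t', agree n t t' -> t = t'}].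

Section Enumeration.
Variables P Q : 'M[nat]_2.
Hypothesis P_total : forall c, succ P c != [::].
Hypothesis Q_total : forall c, succ Q c != [::].

Definition rooted_in (s : seq 'I_2) (t : tree) : Prop :=
  in_shift P Q t /\ t [::] \in s.

Lemma join_shift c tl tr : in_shift P Q tl -> in_shift P Q tr ->
  P c (tl [::]) = 1%N -> Q c (tr [::]) = 1%N -> in_shift P Q (join c tl tr).
Proof. by move=> Sl Sr Pc Qc [|[] x] /=; [split | exact: Sr | exact: Sl]. Qed.

Lemma subtree_shift b t : in_shift P Q t -> in_shift P Q (subtree b t).
Proof. by move=> S x; exact: (S (b :: x)). Qed.

Fixpoint follow (c : 'I_2) (w : node) : 'I_2 :=
  if w is b :: w' then follow (next_in (if b then Q else P) c) w' else c.

Lemma follow_shift c : in_shift P Q (follow c).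
Proof.
move=> x; elim: x c => [|b x IH] c /=; last exact: IH.
by split; apply: next_inP.
Qed.

Lemma represents_follow c : represents (rooted_in [:: c]) 0 [:: follow c].
Proof.
split => [t | t [_ /[!inE] /eqP Ht] | // | t t'].
- by rewrite inE => /eqP ->; split; [exact: follow_shift | rewrite inE].
- exists (follow c); first by rewrite inE.
  by case.
- by rewrite !inE => -> ->.
Qed.

Lemma represents_join n c ls rs :
  represents (rooted_in (succ P c)) n ls -> represents (rooted_in (succ Q c)) n rs ->
  represents (rooted_in [:: c]) n.+1 [seq join c x y | x <- ls, y <- rs].
Proof.
move=> [sL cL uL iL] [sR cR uR iR]; split.
- move=> _ /allpairsP [[x y] [/= /sL [Sx Rx] /sR [Sy Ry] ->]].
  by split; [apply: join_shift => //; apply/eqP; rewrite -mem_succ | rewrite inE].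
- move=> t [St]; rewrite inE => /eqP Rt.
  have [P_root Q_root] := St [::]; rewrite /= Rt in P_root Q_root.
  have [x Lx Ax] : exists2 x, x \in ls & agree n (subtree false t) x.
    by apply: cL; split; [exact: subtree_shift | rewrite mem_succ P_root].
  have [y Ry Ay] : exists2 y, y \in rs & agree n (subtree true t) y.
    by apply: cR; split; [exact: subtree_shift | rewrite mem_succ Q_root].
  exists (join c x y); first by apply/allpairsP; exists (x, y).
  by apply/agree_join.
- rewrite allpairs_uniq // => -[x y] [x' y'] _ _ /= E.
  have Ex : x = x' := congr1 (subtree false) E.
  have Ey : y = y' := congr1 (subtree true) E.
  by rewrite Ex Ey.
- move=> _ _ /allpairsP [[x y] [/= Lx Ry ->]] /allpairsP [[x' y'] [/= Lx' Ry' ->]].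
  by move=> /agree_join [_ /(iL _ _ Lx Lx') -> /(iR _ _ Ry Ry') ->].
Qed.

(* Representatives for distinct roots can be concatenated: trees with
   different roots never agree. *)
Lemma represents_flatten n (s : seq 'I_2) (L : 'I_2 -> seq tree) : uniq s ->
  (forall d, d \in s -> represents (rooted_in [:: d]) n (L d)) ->
  represents (rooted_in s) n (flatten [seq L d | d <- s]).
Proof.
move=> us HL.
have sound d t : d \in s -> t \in L d -> in_shift P Q t /\ t [::] = d.
  by move=> ds tL; have [/(_ t tL) [St]] := HL d ds; rewrite inE => /eqP.
split.
- by move=> t /flatten_mapP [d ds /(sound d t ds) [St Rt]]; split; rewrite ?Rt.
- move=> t [St ts]; have [_ /(_ t) complete _ _] := HL _ ts.
  have [t' Lt' At] := complete (conj St (mem_head _ _)).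
  by exists t' => //; apply/flatten_mapP; exists (t [::]).
- elim: s us HL sound => [|d s IH] //= /andP [ds us] HL sound.
  have [_ _ uLd _] := HL d (mem_head _ _).
  rewrite cat_uniq uLd IH => //.
  + rewrite andbT; apply/hasPn => t /flatten_mapP [d' d's Lt]; apply/negP => Ldt.
    have [_ Rt] := sound d t (mem_head _ _) Ldt.
    have d'ds : d' \in d :: s by rewrite inE d's orbT.
    have [_ Rt'] := sound d' t d'ds Lt.
    by move: ds; rewrite -Rt Rt' d's.
  + by move=> d' d's; apply: HL; rewrite inE d's orbT.
  + by move=> d' t d's; apply: sound; rewrite inE d's orbT.
- move=> t t' /flatten_mapP [d ds Lt] /flatten_mapP [d' d's Lt'] At.
  have [_ Rt] := sound d t ds Lt; have [_ Rt'] := sound d' t' d's Lt'.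
  have Ed : d = d' by rewrite -Rt -Rt' (agree_root At).
  rewrite -Ed in Lt'; have [_ _ _ inj] := HL d ds; exact: inj.
Qed.

Fixpoint reps (n : nat) (c : 'I_2) : seq tree :=
  if n is n'.+1 then
    [seq join c x y | x <- flatten [seq reps n' d | d <- succ P c],
                      y <- flatten [seq reps n' d | d <- succ Q c]]
  else [:: follow c].

Lemma reps_represent n c : represents (rooted_in [:: c]) n (reps n c).
Proof.
elim: n c => [|n IH] c; first exact: represents_follow.
by apply: represents_join; apply: represents_flatten => //; apply: uniq_succ.
Qed.

Definition count_reps (n : nat) (c : 'I_2) : nat := size (reps n c).

Lemma count_reps_succ n c : count_reps n.+1 c =
  (sumn [seq count_reps n d | d <- succ P c] *
   sumn [seq count_reps n d | d <- succ Q c])%N.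
Proof. by rewrite /count_reps /= size_allpairs !size_flatten /shape -!map_comp. Qed.

Lemma p_count_represents n s : represents (rooted_in symbols) n s ->
  p_count P Q n = size s.
Proof.
move=> [sound complete us inj]; rewrite /p_count.
have -> : allowed_blocks P Q n =
          [set u : (size (words_upto n)).-tuple 'I_2 | tval u \in map (block^~ n) s].
  apply/setP => u; rewrite !inE; apply/asboolP/mapP => [[t [St <-]] | [t ts ->]].
    have [t' ts' /block_eqP At] := complete t (conj St (mem_symbols _)).
    by exists t'.
  by exists t; split => //; have [] := sound t ts.
rewrite card_tuples ?size_map //.
  by rewrite map_inj_in_uniq // => t t' ts ts' /block_eqP; apply: inj.
by apply/allP => _ /mapP [t _ ->]; rewrite size_map.
Qed.

Lemma p_count_reps n : p_count P Q n = sumn [seq count_reps n c | c <- symbols].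
Proof.
rewrite (@p_count_represents n (flatten [seq reps n c | c <- symbols])).
  by rewrite size_flatten /shape -map_comp.
by apply: represents_flatten => // d _; apply: reps_represent.
Qed.

End Enumeration.

(* Yseq n = prod_{k <= n} k^(2^(n-k)), the common value of N_n at the
   symbol with a single Q-follower. *)
Fixpoint Yseq (n : nat) : nat := if n is n'.+1 then (n * Yseq n' ^ 2)%N else 1%N.

Lemma Yseq_gt0 n : (0 < Yseq n)%N.
Proof. by elim: n => //= n IH; rewrite muln_gt0 expn_gt0 IH. Qed.

Lemma count_recursion (X Y : nat -> nat) : X 0 = 1%N -> Y 0 = 1%N ->
  (forall n, X n.+1 = X n * (X n + Y n))%N -> (forall n, Y n.+1 = Y n * X n)%N ->
  forall n, X n = (n.+1 * Yseq n)%N /\ Y n = Yseq n.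
Proof.
move=> X0 Y0 XS YS; elim=> [|n [IHx IHy]]; first by rewrite X0 Y0.
by rewrite XS YS IHx IHy /=; split; lia.
Qed.

(* Both shifts have this follower structure (with a,b = 0,1 for (B,D) and
   a,b = 1,0 for (B,F)), which forces p(n) = (n+2) Yseq n. *)
Lemma p_count_closed_form P Q a b : perm_eq symbols [:: a; b] ->
  succ P a = [:: a] -> succ P b = [:: b] ->
  perm_eq (succ Q a) [:: a; b] -> succ Q b = [:: a] ->
  forall n, p_count P Q n = (n.+2 * Yseq n)%N.
Proof.
move=> sym Pa Pb Qa Qb n.
have ab c : c = a \/ c = b.
  by move: (mem_symbols c); rewrite (perm_mem sym) !inE => /orP [] /eqP; [left|right].
have P_total c : succ P c != [::] by case: (ab c) => ->; rewrite ?Pa ?Pb.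
have Q_total c : succ Q c != [::].
  by case: (ab c) => ->; rewrite ?Qb // -size_eq0 (perm_size Qa).
set X := fun n => count_reps P Q n a; set Y := fun n => count_reps P Q n b.
have XS m : X m.+1 = (X m * (X m + Y m))%N.
  by rewrite /X count_reps_succ Pa (perm_sumn (perm_map _ Qa)) /= !addn0.
have YS m : Y m.+1 = (Y m * X m)%N.
  by rewrite /Y count_reps_succ Pb Qb /= !addn0.
have [EX EY] := count_recursion erefl erefl XS YS n.
rewrite (p_count_reps P_total Q_total) (perm_sumn (perm_map _ sym)) /= -/(X n) -/(Y n).
by rewrite EX EY; lia.
Qed.

Lemma succB c : succ matB c = [:: c].
Proof.
by move: (mem_symbols c); rewrite !inE => /orP [] /eqP ->; rewrite /succ /= !mxE.
Qed.

Lemma p_count_BD n : p_count matB matD n = (n.+2 * Yseq n)%N.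
Proof.
by apply: (@p_count_closed_form _ _ ord0 ord_max); rewrite ?succB // /succ /= !mxE.
Qed.

Lemma p_count_BF n : p_count matB matF n = (n.+2 * Yseq n)%N.
Proof.
by apply: (@p_count_closed_form _ _ ord_max ord0); rewrite ?succB // /succ /= !mxE.
Qed.

Local Open Scope classical_set_scope.
Local Open Scope ring_scope.

Lemma cvg_shift_add (R : realType) (u : R^nat) (l : R) k :
  u @ \oo --> l -> (fun n => u (k + n)%N) @ \oo --> l.
Proof.
have -> : (fun n => u (k + n)%N) = [sequence u (n + k)%N]_n.
  by apply/funext => n; rewrite addnC.
by rewrite cvg_shiftn.
Qed.

Section Entropy.
Variable R : realType.
Local Notation part := (log_series_partial R).

(* ln k >= 0 and ln k <= k for every natural number k (with ln 0 = 0). *)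
Lemma ln_nat_ge0 k : 0 <= ln (k%:R : R).
Proof. by case: k => [|k]; [rewrite ln0 | rewrite ln_ge0 // ler1n]. Qed.

Lemma ln_nat_le k : ln (k%:R : R) <= k%:R.
Proof.
case: k => [|k]; first by rewrite ln0.
have hk : (-1 : R) < k%:R by have := ler0n R k; lra.
by have := le_ln1Dx hk; rewrite -natr1 addrC; lra.
Qed.

(* S_{N+1} = S_N + log N / 2^N for every N (the terms N = 0, 1 vanish). *)
Lemma partS N : part N.+1 = part N + ln (N%:R : R) / 2 ^+ N.
Proof.
rewrite /log_series_partial; case: (leqP 2 N) => [N2 | ]; first by rewrite big_nat_recr.
case: N => [|[|N]] // _; rewrite !big_geq // ?ln1.
  by rewrite ln0 // mul0r addr0.
by rewrite mul0r addr0.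
Qed.

Lemma part_nondecreasing : {homo part : n m / (n <= m)%N >-> n <= m}.
Proof.
by apply/nondecreasing_seqP => N; rewrite partS lerDl divr_ge0 ?exprn_ge0 ?ln_nat_ge0.
Qed.

Lemma part_bound N : part N <= 2 - 2 * N.+1%:R / 2 ^+ N.
Proof.
elim: N => [|N IH]; first by rewrite /log_series_partial big_geq // expr0; lra.
rewrite partS; apply: le_trans (lerD IH (ler_wpM2r _ (ln_nat_le N))) _.
  by rewrite invr_ge0 exprn_ge0.
have q0 : (0 : R) < 2 ^+ N by rewrite exprn_gt0.
rewrite exprS -[N.+2%:R]natr1 -[N.+1%:R]natr1.
by rewrite le_eqVlt; apply/orP; left; apply/eqP; field; rewrite gt_eqF.
Qed.

Definition log_series : R := sup (range part).

Lemma part_cvg : part @ \oo --> log_series.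
Proof.
apply: nondecreasing_cvgn; first exact: part_nondecreasing.
exists 2 => _ [N _ <-]; apply: le_trans (part_bound N) _.
by rewrite gerBl mulr_ge0 // divr_ge0 ?exprn_ge0.
Qed.

Lemma ln_Yseq n : ln ((Yseq n)%:R : R) = 2 ^+ n * part n.+1.
Proof.
elim: n => [|n IH]; first by rewrite ln1 /log_series_partial big_geq // mulr0.
have Y0 : (0 : R) < (Yseq n)%:R by rewrite ltr0n Yseq_gt0.
rewrite /= natrM natrX lnM ?posrE ?ltr0Sn ?exprn_gt0 // lnXn // IH.
rewrite [part n.+2]partS mulr2n exprS.
by field; rewrite ?mulf_neq0 ?expf_neq0.
Qed.

Lemma ln_p n : ln ((n.+2 * Yseq n)%N%:R : R) =
  2 ^+ n * (part n.+1 + 4 * (part n.+3 - part n.+2)).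
Proof.
have Y0 : (0 : R) < (Yseq n)%:R by rewrite ltr0n Yseq_gt0.
rewrite natrM lnM ?posrE ?ltr0Sn // ln_Yseq [part n.+3]partS addrAC subrr add0r !exprS.
by field; rewrite ?mulf_neq0 ?expf_neq0.
Qed.

Lemma sum_pow2 n : ((\sum_(i < n.+1) 2 ^ i)%N%:R : R) = 2 ^+ n.+1 - 1.
Proof.
rewrite natr_sum (subrX1 2 n.+1) [2 - 1 : R](_ : _ = 1) ?mul1r; last by lra.
by apply: eq_bigr => i _; rewrite natrX.
Qed.

(* 2^n / (2^{n+1} - 1) = 1 / (2 - 2^-n) tends to 1/2. *)
Lemma pow2_ratio_cvg : (fun n => 2 ^+ n / (2 ^+ n.+1 - 1) : R) @ \oo --> (2^-1 : R).
Proof.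
have -> : (fun n => 2 ^+ n / (2 ^+ n.+1 - 1) : R) = (fun n => (2 - 2^-1 ^+ n)^-1).
  apply/funext => n; have q1 : (1 : R) <= 2 ^+ n by rewrite exprn_ege1 // ler1n.
  rewrite exprVn exprS; field; apply/andP; split; rewrite ?expf_neq0 //.
  by rewrite gt_eqF //; lra.
apply: (cvgV (f := fun n => 2 - 2^-1 ^+ n)) => //.
rewrite -[X in _ --> X]subr0; apply: cvgB; first exact: cvg_cst.
by apply: cvg_expr; rewrite gtr0_norm ?invr_gt0 // invf_lt1 // ltr1n.
Qed.

Lemma hPS_limit P Q : (forall n, p_count P Q n = (n.+2 * Yseq n)%N) ->
  hPS_seq R P Q @ \oo --> 2^-1 * log_series.
Proof.
move=> p_closed.
have -> : hPS_seq R P Q =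
    (fun n => 2 ^+ n / (2 ^+ n.+1 - 1) * (part n.+1 + 4 * (part n.+3 - part n.+2))).
  by apply/funext => n; rewrite /hPS_seq p_closed ln_p sum_pow2 mulrAC.
rewrite -[X in _ --> X](_ : 2^-1 * (log_series + 4 * (log_series - log_series)) = _);
  last by rewrite subrr mulr0 addr0.
have shifted k := cvg_shift_add k part_cvg.
have S1 : (fun n => part n.+1) @ \oo --> log_series := shifted 1%N.
have S2 : (fun n => part n.+2) @ \oo --> log_series := shifted 2%N.
have S3 : (fun n => part n.+3) @ \oo --> log_series := shifted 3%N.
apply: cvgM; first exact: pow2_ratio_cvg.
apply: cvgD => //; apply: cvgM; [exact: cvg_cst | exact: cvgB].
Qed.
End Entropy.

Theorem mainTheorem16 (R : realType) :
  exists S : R,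
    log_series_partial R @ \oo --> S /\
    hPS_seq R matB matD @ \oo --> 2^-1 * S /\
    hPS_seq R matB matF @ \oo --> 2^-1 * S.
Proof.
exists (log_series R); split; first exact: part_cvg.
by split; apply: hPS_limit; [exact: p_count_BD | exact: p_count_BF].
Qed.
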